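(* Let $G=(V,E)$ be a finite graph of maximum degree $\Delta$, and for $u\in V$ let $d_u$ denote the degree of $u$. Let $\boldsymbol\lambda\in[0,\infty)^{V}$ satisfy $\lambda_u<1/\Delta$ for all $u\in V$. Then \[ \mathbb{E}_{G,\boldsymbol\lambda}|I| \;\ge\; \sum_{u\in V}\frac{\lambda_u}{1+(d_u+1)\lambda_u}. \]
   Context: For a graph $G=(V,E)$, $\mathcal I(G)$ denotes the set of independent sets of $G$ (including $\emptyset$). For a fugacity vector $\boldsymbol\lambda\in[0,\infty)^V$, the hard-core model is the probability measure on $\mathcal I(G)$ given by $\Pr_{G,\boldsymbol\lambda}(I)=\frac{1}{Z_G(\boldsymbol\lambda)}\prod_{v\in I}\lambda_v$, where $Z_G(\boldsymbol\lambda)=\sum_{J\in\mathcal I(G)}\prod_{v\in J}\lambda_v$. $\mathbb{E}_{G,\boldsymbol\lambda}$ denotes expectation with respect to this measure, and $I$ denotes the random independent set. *)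

From mathcomp Require Import all_boot all_order all_algebra.
Set Implicit Arguments. Unset Strict Implicit. Unset Printing Implicit Defensive.
Import Order.TTheory GRing.Theory Num.Theory.
Local Open Scope ring_scope.

Definition simple_graph (T : finType) (e : rel T) : Prop :=
  symmetric e /\ irreflexive e.

Definition deg (T : finType) (e : rel T) (u : T) : nat := #|[set v | e u v]|.

Definition maxdeg (T : finType) (e : rel T) : nat := (\max_(u : T) deg e u)%N.

Definition independent (T : finType) (e : rel T) (I : {set T}) : bool :=
  [forall u in I, forall v in I, ~~ e u v].

Definition hc_weight (R : numFieldType) (T : finType) (lam : T -> R) (I : {set T}) : R :=
  \prod_(v in I) lam v.

Definition hc_Z (R : numFieldType) (T : finType) (e : rel T) (lam : T -> R) : R :=
  \sum_(I : {set T} | independent e I) hc_weight lam I.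

Definition hc_prob (R : numFieldType) (T : finType) (e : rel T) (lam : T -> R)
  (I : {set T}) : R :=
  if independent e I then hc_weight lam I / hc_Z e lam else 0.

Definition hc_expected_size (R : numFieldType) (T : finType) (e : rel T)
  (lam : T -> R) : R :=
  \sum_(I : {set T} | independent e I) (#|I|%:R * hc_prob e lam I).

From mathcomp Require Import all_boot all_order all_algebra.
From mathcomp Require Import ring lra.
Import Order.TTheory GRing.Theory Num.Theory.
Local Open Scope ring_scope.
Set Implicit Arguments. Unset Strict Implicit. Unset Printing Implicit Defensive.

(* Write p_v = Pr[v \in I] and N[v] for the closed neighbourhood of v.  The
   hard-core identity Pr[v \in I] = lam_v Pr[I meets no vertex of N[v]] and a
   union bound give the linear inequalities  p_v + lam_v sum_(u in N[v]) p_u >= lam_v.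
   The corresponding linear system  x_v + lam_v sum_(u in N[v]) x_u = lam_v  has a
   unique solution x, and x >= 0 because lam_v Delta < 1; as the system becomes
   symmetric after dividing row v by lam_v, testing the inequalities for p
   against x gives sum p >= sum x.
   In matrix form x = M^-1 1 with M = diag(1/lam + 1) + A, while the claimed bound
   is sum f for f = D^-1 1, D = diag(1/lam + d + 1).  Since D - M is the graph
   Laplacian L, we get sum x - sum f = x^T L f = w^T M w + f^T L f >= 0 with
   w = x - f, both Laplacians L and M - diag(1/lam + 1 - d) being positive
   semidefinite. *)

Lemma solvable_of_injective (R : fieldType) (T : finType) (A : T -> T -> R) :
  (forall y : T -> R, (forall v, \sum_u A v u * y u = 0) -> forall v, y v = 0) ->
  forall b : T -> R, exists x : T -> R, forall v, \sum_u A v u * x u = b v.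
Proof.
move=> injA b.
pose M : 'M[R]_#|T| := \matrix_(i, j) A (enum_val j) (enum_val i).
have mulM (X : 'rV_#|T|) v :
    (X *m M) 0 (enum_rank v) = \sum_u A v u * X 0 (enum_rank u).
  have -> : \sum_u A v u * X 0 (enum_rank u) =
      \sum_(i < #|T|) A v (enum_val i) * X 0 (enum_rank (enum_val i)).
    by rewrite -(big_enum_val (fun u => A v u * X 0 (enum_rank u))).
  by rewrite mxE; apply: eq_bigr => i _; rewrite mxE enum_rankK enum_valK mulrC.
have M_unit : M \in unitmx.
  rewrite unitmxE unitfE; apply/negP => /det0P [X /negP nzX XM0]; apply: nzX.
  apply/eqP/rowP => j; rewrite mxE -(enum_valK j).
  by apply: (injA (fun u => X 0 (enum_rank u))) => v; rewrite -mulM XM0 mxE.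
exists (fun u => ((\row_j b (enum_val j)) *m invmx M) 0 (enum_rank u)) => v.
by rewrite -mulM mulmxKV // mxE enum_rankK.
Qed.

Definition nsum (R : nmodType) (T : finType) (e : rel T) (y : T -> R) (v : T) : R :=
  \sum_(u | e v u) y u.

Lemma nsum_cst (R : pzSemiRingType) (T : finType) (e : rel T) (c : R) v :
  nsum e (fun=> c) v = (deg e v)%:R * c.
Proof.
rewrite /nsum /deg mulr_natl -sumr_const; apply: eq_bigl => u.
by rewrite inE.
Qed.

Lemma sum_mul_nsumC (R : comPzRingType) (T : finType) (e : rel T) (a b : T -> R) :
  symmetric e -> \sum_v a v * nsum e b v = \sum_v b v * nsum e a v.
Proof.
move=> e_sym.
transitivity (\sum_v \sum_u (if e v u then a v * b u else 0)).
  by apply: eq_bigr => v _; rewrite mulr_sumr big_mkcond.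
rewrite exchange_big /=; apply: eq_bigr => u _.
rewrite /nsum mulr_sumr [RHS]big_mkcond; apply: eq_bigr => v _.
by rewrite e_sym; case: (e u v); rewrite // mulrC.
Qed.

Lemma abs_sum_mul_nsum_le (R : realDomainType) (T : finType) (e : rel T) (y : T -> R) :
  symmetric e -> `|\sum_v y v * nsum e y v| <= \sum_v (deg e v)%:R * y v ^+ 2.
Proof.
move=> e_sym; set Q := \sum_v _; set D := \sum_v _.
have nsum_sqr : \sum_v nsum e (fun u => y u ^+ 2) v = D.
  transitivity (\sum_v 1 * nsum e (fun u => y u ^+ 2) v).
    by apply: eq_bigr => v _; rewrite mul1r.
  by rewrite sum_mul_nsumC //; apply: eq_bigr => v _; rewrite nsum_cst mulr1 mulrC.
have sum_sqr (s : R) : \sum_v nsum e (fun u => (y v + s * y u) ^+ 2) v =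
    D + s ^+ 2 * \sum_v nsum e (fun u => y u ^+ 2) v + 2 * s * Q.
  rewrite /D /Q !mulr_sumr -!big_split /=; apply: eq_bigr => v _.
  rewrite -nsum_cst /nsum !mulr_sumr -!big_split /=.
  by apply: eq_bigr => u _; ring.
have sqr_ge0 (s : R) : 0 <= D + s ^+ 2 * D + 2 * s * Q.
  rewrite -{2}nsum_sqr -sum_sqr.
  by apply: sumr_ge0 => v _; apply: sumr_ge0 => u _; apply: sqr_ge0.
have := sqr_ge0 1; have := sqr_ge0 (-1).
rewrite ler_norml; lra.
Qed.

Section LinearisedOccupancy.

Variables (R : realFieldType) (T : finType) (e : rel T) (lam : T -> R).
Hypothesis e_sym : symmetric e.
Hypothesis lam_ge0 : forall v, 0 <= lam v.
Hypothesis lam_maxdeg_lt1 : forall v, lam v * (maxdeg e)%:R < 1.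

(* [hc_lin y = lam] is the linearisation of the hard-core relations above. *)
Definition hc_lin (y : T -> R) v := y v + lam v * (y v + nsum e y v).

Lemma deg_le_maxdeg v : (deg e v <= maxdeg e)%N.
Proof. exact: leq_bigmax. Qed.

Lemma lam_deg_lt1 v : lam v * (deg e v)%:R < 1.
Proof.
by apply: le_lt_trans (lam_maxdeg_lt1 v); rewrite ler_wpM2l // ler_nat deg_le_maxdeg.
Qed.

(* A vertex where x leaves [lo, hi] furthest cannot satisfy its equation: its
   neighbours lie in the enlarged box, and lam_v d_v < 1. *)
Lemma hc_lin_bounded (x : T -> R) (r lo hi : R) :
  (forall v, hc_lin x v = lam v * r) ->
  (forall v, lo * (1 + lam v) <= lam v * (r - (deg e v)%:R * hi)) ->
  (forall v, lam v * (r - (deg e v)%:R * lo) <= hi * (1 + lam v)) ->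
  forall v, lo <= x v <= hi.
Proof.
move=> xE lo_ok hi_ok v.
pose viol t := Num.max (lo - t) (t - hi).
pose v0 := [arg max_(i > v) viol (x i)]%O.
have viol_max i : viol (x i) <= viol (x v0).
  by rewrite /v0; case: arg_maxP => //= j _; apply.
suff : viol (x v0) <= 0.
  by move=> /(le_trans (viol_max v)); rewrite ge_max !subr_le0.
set d := viol (x v0).
have x_near u : lo - d <= x u <= hi + d.
  by have := viol_max u; rewrite -/d ge_max => /andP[? ?]; apply/andP; split; lra.
have S_le : nsum e x v0 <= (deg e v0)%:R * (hi + d).
  by rewrite -nsum_cst; apply: ler_sum => u _; case/andP: (x_near u).
have S_ge : (deg e v0)%:R * (lo - d) <= nsum e x v0.
  by rewrite -nsum_cst; apply: ler_sum => u _; case/andP: (x_near u).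
rewrite leNgt; apply/negP => d_gt0.
have lS_le : lam v0 * nsum e x v0 <= lam v0 * ((deg e v0)%:R * (hi + d)).
  by rewrite ler_wpM2l.
have lS_ge : lam v0 * ((deg e v0)%:R * (lo - d)) <= lam v0 * nsum e x v0.
  by rewrite ler_wpM2l.
have gap : 0 < d * (1 - lam v0 * (deg e v0)%:R) by rewrite mulr_gt0 // subr_gt0 lam_deg_lt1.
have dlam_ge0 : 0 <= d * lam v0 by rewrite mulr_ge0 // ltW.
have d_cases : d = lo - x v0 \/ d = x v0 - hi.
  by rewrite /d /viol maxEle; case: ifP; [right|left].
have := xE v0; have := lo_ok v0; have := hi_ok v0; rewrite /hc_lin.
by case: d_cases => d_eq; nra.
Qed.

Lemma hc_lin_injective (y : T -> R) : (forall v, hc_lin y v = 0) -> forall v, y v = 0.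
Proof.
move=> y0 v; apply/eqP; rewrite eq_le andbC.
by apply: (hc_lin_bounded (r := 0)) => u; rewrite ?(y0, mul0r, mulr0, subr0).
Qed.

Lemma hc_lin_solution_ge0 (x : T -> R) :
  (forall v, hc_lin x v = lam v) -> forall v, 0 <= x v.
Proof.
move=> xE v; set c := ((maxdeg e).+1%:R : R)^-1.
have c_gt0 : 0 < c by rewrite invr_gt0 ltr0n.
have c_maxdeg : (maxdeg e)%:R * c <= 1.
  by rewrite ler_pdivrMr ?ltr0n // mul1r ler_nat.
suff /(_ v)/andP[] : forall v, 0 <= x v <= c by [].
apply: (hc_lin_bounded (r := 1)) => u; first by rewrite mulr1.
- rewrite mul0r mulr_ge0 // subr_ge0.
  by apply: le_trans c_maxdeg; rewrite ler_pM2r // ler_nat deg_le_maxdeg.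
- rewrite mulr0 subr0 mulr1 mulrC ler_pdivlMr ?ltr0n //.
  have := lam_maxdeg_lt1 u; have := lam_ge0 u; rewrite -natr1; nra.
Qed.

Lemma hc_linE (y : T -> R) v :
  hc_lin y v = \sum_u ((v == u)%:R * (1 + lam v) + lam v * (e v u)%:R) * y u.
Proof.
under [RHS]eq_bigr do rewrite mulrDl -!mulrA.
rewrite big_split /= (bigD1 v) //= eqxx mul1r big1 ?addr0 => [|u uv]; last first.
  by rewrite eq_sym (negbTE uv) mul0r.
rewrite -mulr_sumr /hc_lin /nsum big_mkcond mulrDr mulrDl mul1r addrA.
by congr (_ + _ * _); apply: eq_bigr => u _; case: (e v u); rewrite ?mul1r ?mul0r.
Qed.

Lemma hc_lin_solvable : exists x : T -> R, forall v, hc_lin x v = lam v.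
Proof.
pose A v u := (v == u)%:R * (1 + lam v) + lam v * (e v u)%:R.
have A_inj y : (forall v, \sum_u A v u * y u = 0) -> forall v, y v = 0.
  by move=> y0; apply: hc_lin_injective => v; rewrite hc_linE; apply: y0.
have [x xE] := solvable_of_injective A_inj lam.
by exists x => v; rewrite hc_linE; apply: xE.
Qed.

Lemma sum_mul_le_of_cover (x p q : T -> R) (z : R) :
  (forall v, hc_lin x v = lam v) -> (forall v, p v = lam v * q v) ->
  (forall v, z <= q v + p v + nsum e p v) -> (\sum_v x v) * z <= \sum_v p v.
Proof.
move=> xE pE cover.
have -> : \sum_v p v = \sum_v x v * (q v + p v + nsum e p v).
  transitivity (\sum_v (x v * q v + x v * p v) + \sum_v x v * nsum e p v); last first.
    by rewrite -big_split; apply: eq_bigr => v _ /=; ring.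
  rewrite sum_mul_nsumC // -big_split; apply: eq_bigr => v _ /=.
  by rewrite pE -[in LHS](xE v) /hc_lin; ring.
rewrite mulr_suml; apply: ler_sum => v _.
by rewrite ler_wpM2l // hc_lin_solution_ge0.
Qed.

Definition laplacian (y : T -> R) v := (deg e v)%:R * y v - nsum e y v.

Lemma sum_mul_laplacianC (a b : T -> R) :
  \sum_v a v * laplacian b v = \sum_v b v * laplacian a v.
Proof.
rewrite /laplacian; under eq_bigr do rewrite mulrBr; under [RHS]eq_bigr do rewrite mulrBr.
rewrite !sumrB sum_mul_nsumC //; congr (_ - _).
by apply: eq_bigr => v _; ring.
Qed.

Lemma sum_mul_laplacian_ge0 (y : T -> R) : 0 <= \sum_v y v * laplacian y v.
Proof.
have := abs_sum_mul_nsum_le y e_sym; rewrite ler_norml => /andP[_ Q_le].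
rewrite /laplacian; under eq_bigr do rewrite mulrBr; rewrite sumrB subr_ge0.
by rewrite [X in _ <= X](eq_bigr (fun v => (deg e v)%:R * y v ^+ 2)) => [//|v _]; ring.
Qed.

Definition occupancy_lb v := lam v / (1 + (deg e v).+1%:R * lam v).

Lemma occupancy_lb_den_gt0 v : 0 < 1 + (deg e v).+1%:R * lam v.
Proof. by rewrite ltr_wpDr // mulr_ge0. Qed.

Lemma hc_lin_occupancy_lb v :
  hc_lin occupancy_lb v = lam v * (1 - laplacian occupancy_lb v).
Proof.
have den_eq : occupancy_lb v * (1 + (deg e v).+1%:R * lam v) = lam v.
  by rewrite mulfVK // gt_eqF // occupancy_lb_den_gt0.
by rewrite mulrBr mulr1 -[X in _ = X - _]den_eq /hc_lin /laplacian; ring.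
Qed.

Lemma occupancy_lb_mul_laplacian (x : T -> R) v :
  hc_lin x v = lam v -> occupancy_lb v * laplacian x v = x v - occupancy_lb v.
Proof.
rewrite /hc_lin /laplacian /occupancy_lb => xE.
set k := _^-1; have k_den : k * (1 + (deg e v).+1%:R * lam v) = 1.
  by rewrite mulVf // gt_eqF // occupancy_lb_den_gt0.
have lam_S : lam v * nsum e x v = lam v - x v - lam v * x v.
  by move: xE; rewrite mulrDr; lra.
transitivity (k * ((deg e v)%:R * lam v * x v - lam v * nsum e x v)); first by ring.
rewrite lam_S; transitivity (x v * (k * (1 + (deg e v).+1%:R * lam v)) - lam v * k).
  by rewrite -natr1; ring.
by rewrite k_den; ring.
Qed.

Lemma sum_occupancy_lb_le (x : T -> R) :
  (forall v, hc_lin x v = lam v) -> \sum_v occupancy_lb v <= \sum_v x v.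
Proof.
move=> xE; set f := occupancy_lb; pose w v := x v - f v.
have w_lin v : hc_lin w v = lam v * laplacian f v.
  have -> : hc_lin w v = hc_lin x v - hc_lin f v by rewrite /hc_lin /w /nsum sumrB; ring.
  by rewrite xE hc_lin_occupancy_lb; ring.
have w_lap v : (deg e v)%:R * w v ^+ 2 + w v * nsum e w v <= w v * laplacian f v.
  have [lam0|lam_neq0] := eqVneq (lam v) 0.
    have : hc_lin w v = 0 by rewrite w_lin lam0 mul0r.
    by rewrite /hc_lin lam0 mul0r addr0 => w0; rewrite w0 expr2 !(mul0r, mulr0, addr0).
  have lam_gt0 : 0 < lam v by rewrite lt_def lam_neq0 lam_ge0.
  rewrite -(ler_pM2l lam_gt0) [X in _ <= X]mulrCA -w_lin /hc_lin.
  have := lam_deg_lt1 v; have := sqr_ge0 (w v); nra.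
have sum_xf : \sum_v x v - \sum_v f v = \sum_v x v * laplacian f v.
  rewrite -sumrB sum_mul_laplacianC; apply: eq_bigr => v _.
  by rewrite occupancy_lb_mul_laplacian.
have quad_w : 0 <= \sum_v w v * laplacian f v.
  apply: le_trans (ler_sum _ (fun v _ => w_lap v)); rewrite big_split /=.
  have := abs_sum_mul_nsum_le w e_sym; rewrite ler_norml => /andP[+ _].
  by rewrite -subr_ge0 opprK addrC.
rewrite -subr_ge0 sum_xf.
have -> : \sum_v x v * laplacian f v =
    \sum_v w v * laplacian f v + \sum_v f v * laplacian f v.
  by rewrite -big_split; apply: eq_bigr => v _ /=; rewrite /w; ring.
by rewrite addr_ge0 // sum_mul_laplacian_ge0.
Qed.

End LinearisedOccupancy.

Section HardCore.

Variables (R : realFieldType) (T : finType) (e : rel T) (lam : T -> R).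
Hypotheses (e_sym : symmetric e) (e_irr : irreflexive e).
Hypothesis lam_ge0 : forall v, 0 <= lam v.

Definition nbhd u : {set T} := u |: [set v | e u v].

Definition hc_Zin u : R :=
  \sum_(I : {set T} | independent e I && (u \in I)) hc_weight lam I.

Definition hc_Zfree u : R :=
  \sum_(I : {set T} | independent e I && [disjoint nbhd u & I]) hc_weight lam I.

Lemma independentP (I : {set T}) :
  reflect (forall a b, a \in I -> b \in I -> ~~ e a b) (independent e I).
Proof.
apply: (iffP forallP) => [indI a b aI bI | indI a].
  by move: (indI a); rewrite aI => /forallP/(_ b); rewrite bI.
by apply/implyP => aI; apply/forallP => b; apply/implyP; apply: indI.
Qed.

Lemma hc_weight_ge0 I : 0 <= hc_weight lam I.
Proof. exact: prodr_ge0. Qed.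

Lemma hc_Z_gt0 : 0 < hc_Z e lam.
Proof.
rewrite /hc_Z (bigD1 set0) /=; last by apply/independentP => a b; rewrite inE.
rewrite /hc_weight big_set0 ltr_pwDl // sumr_ge0 // => I _.
exact: hc_weight_ge0.
Qed.

Lemma hc_expected_size_mulZ : hc_expected_size e lam * hc_Z e lam = \sum_u hc_Zin u.
Proof.
have Z_neq0 : hc_Z e lam != 0 by rewrite gt_eqF // hc_Z_gt0.
rewrite /hc_expected_size mulr_suml.
transitivity (\sum_(I : {set T} | independent e I)
                \sum_u (if u \in I then hc_weight lam I else 0)).
  apply: eq_bigr => I indI; rewrite /hc_prob indI mulrA mulfVK //.
  by rewrite -big_mkcond /= sumr_const mulr_natl.
by rewrite exchange_big /=; apply: eq_bigr => u _; rewrite /hc_Zin big_mkcondr.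
Qed.

Lemma disjoint_nbhdP u (J : {set T}) :
  reflect (u \notin J /\ forall v, e u v -> v \notin J) [disjoint nbhd u & J].
Proof.
apply: (iffP pred0P) => [disj | [uJ nJ] v /=].
  split; [have := disj u | move=> v euv; have := disj v];
    by rewrite /= !inE ?eqxx ?euv ?orbT /= => ->.
rewrite !inE; have [->|_] /= := eqP; first exact: negbTE.
by case euv: (e u v); rewrite //= (negbTE (nJ v euv)).
Qed.

Lemma independent_setU1 u (J : {set T}) :
  independent e (u |: J) && (u \notin J) = independent e J && [disjoint nbhd u & J].
Proof.
apply/andP/andP => [[/independentP indU uJ] | [/independentP indJ /disjoint_nbhdP[uJ nJ]]].
  split; first by apply/independentP => a b aJ bJ; apply: indU; rewrite inE ?aJ ?bJ orbT.
  apply/disjoint_nbhdP; split=> // v euv; apply/negP => vJ.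
  by have := indU u v; rewrite !inE eqxx vJ orbT euv => /(_ isT isT).
split=> //; apply/independentP => a b; rewrite !inE.
have nJ' c : c \in J -> ~~ e u c by move=> cJ; apply: contraL cJ; apply: nJ.
case/predU1P => [->|aJ] /predU1P[->|bJ]; first by rewrite e_irr.
- exact: nJ'.
- by rewrite e_sym nJ'.
- exact: indJ.
Qed.

Lemma hc_Zin_factor u : hc_Zin u = lam u * hc_Zfree u.
Proof.
rewrite /hc_Zin /hc_Zfree mulr_sumr.
rewrite (reindex_onto (fun J => u |: J) (fun I => I :\ u)) /=; last first.
  by move=> I /andP[_ uI]; rewrite setD1K.
apply: eq_big => J.
  rewrite setU11 andbT -independent_setU1; congr (_ && _).
  by apply/eqP/idP => [<-|uJ]; [rewrite !inE eqxx | rewrite setU1K].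
move=> /andP[_ /eqP defJ]; have uJ : u \notin J by rewrite -defJ setD11.
by rewrite /hc_weight big_setU1.
Qed.

Lemma hc_Z_le_cover u : hc_Z e lam <= hc_Zfree u + hc_Zin u + nsum e hc_Zin u.
Proof.
rewrite /hc_Zfree /hc_Zin /nsum !big_mkcondr /=.
under [X in _ <= _ + X]eq_bigr do rewrite big_mkcondr.
rewrite exchange_big /= -!big_split /=; apply: ler_sum => I _.
have w_ge0 := hc_weight_ge0 I.
have if_ge0 (b : bool) : 0 <= (if b then hc_weight lam I else 0) by case: b.
have rest_ge0 : 0 <= \sum_(v | e u v) (if v \in I then hc_weight lam I else 0).
  exact: sumr_ge0.
case: ifP => [_|disj]; first by rewrite -addrA lerDl addr_ge0.
case: ifP => [_|uI]; first by rewrite add0r lerDl.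
have [v /andP[euv vI]] : exists v, e u v && (v \in I).
  apply/existsP; apply: contraFT disj => /existsPn nv; apply/disjoint_nbhdP.
  by split=> [|v euv]; [rewrite uI | have := nv v; rewrite euv].
rewrite !add0r (bigD1 v) //= vI lerDl; exact: sumr_ge0.
Qed.

End HardCore.

Theorem theorem1p1 (R : realFieldType) (T : finType) (e : rel T)
  (lam : T -> R) :
  simple_graph e ->
  (forall u, 0 <= lam u) ->
  (forall u, lam u * (maxdeg e)%:R < 1) ->
  \sum_(u : T) lam u / (1 + (deg e u).+1%:R * lam u) <= hc_expected_size e lam.
Proof.
move=> [e_sym e_irr] lam_ge0 lam_maxdeg.
have [x xE] := hc_lin_solvable lam_ge0 lam_maxdeg.
apply: le_trans (sum_occupancy_lb_le e_sym lam_ge0 lam_maxdeg xE) _.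
rewrite -(ler_pM2r (hc_Z_gt0 e lam_ge0)) hc_expected_size_mulZ //.
apply: (sum_mul_le_of_cover e_sym lam_ge0 lam_maxdeg xE) => u.
- exact: hc_Zin_factor.
- exact: hc_Z_le_cover.
Qed.
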